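(* Let $s_1\in\mathbb{Q}$ with $0<s_1<1$ and put $u_1=\frac{1-s_1^2}{2s_1}$. Let $m\in\mathbb{Q}$ with $0<m<\sqrt2-1$, and let $\alpha\in(0,\pi/4)$ be the angle with generator $m$, so that $\cos\alpha=\frac{1-m^2}{1+m^2}$ and $\sin\alpha=\frac{2m}{1+m^2}$. Write $\omega_\pm=\omega_\pm(\alpha)=\cos\alpha\pm\sin\alpha$. (a) For nonzero real numbers $s_2,s_3,s_4$, with $Q=s_3s_4$, the system $$s_2s_3=\omega_-,\qquad s_2s_3=Q\,\omega_+,\qquad s_2\,\omega_+=2u_1\,\omega_-+s_4$$ holds if and only if $$s_2=2u_1\cot(2\alpha),\qquad s_3=\frac{\omega_-}{s_2},\qquad s_4=\frac{s_2}{\omega_+}.$$ (b) Let $s_2,s_3,s_4$ be given by these formulas, and suppose $0<s_k<1$ for $k=2,3,4$. Put $u_k=\frac{1-s_k^2}{2s_k}$ and $v_k=\frac{1+s_k^2}{2s_k}$ for $k=1,2,3,4$. Then all $u_k,v_k$ are positive rational numbers satisfying $$1+u_k^2=v_k^2\ (k=1,2,3,4),\qquad 2u_1^2+2u_2^2=u_3^2+u_4^2 .$$ Consequently, writing $x$ for a common denominator and $y=xu_1$, $z=xu_2$, $c_1=xu_3$, $c_2=xu_4$, $a=xv_1$, $b=xv_2$, $d_1=xv_3$, $d_2=xv_4$, the numbers satisfy $x^2+y^2=a^2$, $x^2+z^2=b^2$, $x^2+c_1^2=d_1^2$, $x^2+c_2^2=d_2^2$, $2y^2+2z^2=c_1^2+c_2^2$,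 i.e. they form a rational (after scaling, perfect) leaning box.
   Context: The generator of an angle $\theta$ is $m(\theta)=\frac{\sin\theta}{1+\cos\theta}=\tan(\theta/2)$. A leaning box is a parallelepiped with edges $x,y,z$ whose faces spanned by $(x,y)$ and $(x,z)$ are rectangles (diagonals $a$, $b$) and whose face spanned by $(y,z)$ is a parallelogram with diagonals $c_1,c_2$; its two distinct body diagonals are $d_1,d_2$. It is perfect if all nine quantities are positive integers. *)

From Stdlib Require Import Reals QArith Qreals List.
Open Scope R_scope.

Definition is_rat (x : R) : Prop := exists q : Q, Q2R q = x.

Definition cot (x : R) : R := cos x / sin x.

(* the angle whose generator m(theta) = tan(theta/2) is m, taken in (-pi,pi) *)
Definition angle_of_gen (m : R) : R := 2 * atan m.

Definition omega_p (a : R) : R := cos a + sin a.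
Definition omega_m (a : R) : R := cos a - sin a.

Definition uu (s : R) : R := (1 - s ^ 2) / (2 * s).
Definition vv (s : R) : R := (1 + s ^ 2) / (2 * s).

(* The generator m parametrises cos and sin of the angle rationally, so every
   quantity built from s1 and m is rational.  For part (a), the first two
   equations force s2 = s4 * omega_+ (s3 is nonzero); substituting into the third
   and using omega_+^2 = 1 + sin(2 alpha) leaves a linear equation for s2.
   For part (b), with p = omega_+ and q = omega_- one has p^2 + q^2 = 2 and
   p q = cos(2 alpha), and the relation 2 u1^2 + 2 u2^2 = u3^2 + u4^2 reduces to
   1 - cos^2(2 alpha) = sin^2(2 alpha). *)
From Stdlib Require Import Reals QArith Qreals List Lra Lia Psatz.
Open Scope R_scope.

Lemma cos_angle_of_gen m : cos (angle_of_gen m) = (1 - m ^ 2) / (1 + m ^ 2).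
Proof.
  unfold angle_of_gen; rewrite cos_2a, cos_atan, sin_atan.
  assert (Hpos : 0 < 1 + m²) by (unfold Rsqr; nra).
  assert (Hsqrt := sqrt_lt_R0 _ Hpos).
  unfold Rsqr in *; field_simplify; try lra.
  rewrite !pow2_sqrt; try lra.
  field; lra.
Qed.

Lemma sin_angle_of_gen m : sin (angle_of_gen m) = 2 * m / (1 + m ^ 2).
Proof.
  unfold angle_of_gen; rewrite sin_2a, cos_atan, sin_atan.
  assert (Hpos : 0 < 1 + m²) by (unfold Rsqr; nra).
  assert (Hsqrt := sqrt_lt_R0 _ Hpos).
  unfold Rsqr in *; field_simplify; try lra.
  rewrite !pow2_sqrt; try lra.
  field; lra.
Qed.

Lemma cos_sin_angle_of_gen_pos m :
  0 < m < 1 -> 0 < cos (angle_of_gen m) /\ 0 < sin (angle_of_gen m).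
Proof.
  intros Hm; rewrite cos_angle_of_gen, sin_angle_of_gen.
  split; apply Rdiv_lt_0_compat; nra.
Qed.

Lemma cot_double x :
  cot (2 * x) = (cos x * cos x - sin x * sin x) / (2 * sin x * cos x).
Proof. unfold cot; rewrite sin_2a, cos_2a; reflexivity. Qed.

Lemma is_rat_IZR z : is_rat (IZR z).
Proof. exists (inject_Z z); unfold Q2R; simpl; field. Qed.

Lemma is_rat_plus x y : is_rat x -> is_rat y -> is_rat (x + y).
Proof. intros [a <-] [b <-]; exists (a + b)%Q; apply Q2R_plus. Qed.

Lemma is_rat_mult x y : is_rat x -> is_rat y -> is_rat (x * y).
Proof. intros [a <-] [b <-]; exists (a * b)%Q; apply Q2R_mult. Qed.

Lemma is_rat_opp x : is_rat x -> is_rat (- x).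
Proof. intros [a <-]; exists (- a)%Q; apply Q2R_opp. Qed.

Lemma is_rat_minus x y : is_rat x -> is_rat y -> is_rat (x - y).
Proof. intros; apply is_rat_plus; [|apply is_rat_opp]; assumption. Qed.

(* [/ 0] is [0] in Rocq, so no side condition is needed. *)
Lemma is_rat_inv x : is_rat x -> is_rat (/ x).
Proof.
  intros [a <-]; destruct (Qeq_dec a 0) as [Ha | Ha].
  - rewrite (Qeq_eqR _ _ Ha), RMicromega.Q2R_0, Rinv_0; apply (is_rat_IZR 0).
  - exists (/ a)%Q; apply Q2R_inv; assumption.
Qed.

Lemma is_rat_div x y : is_rat x -> is_rat y -> is_rat (x / y).
Proof. intros; apply is_rat_mult; [|apply is_rat_inv]; assumption. Qed.

Lemma is_rat_pow x n : is_rat x -> is_rat (x ^ n).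
Proof.
  intros Hx; induction n as [|n IH]; simpl.
  - apply (is_rat_IZR 1).
  - apply is_rat_mult; assumption.
Qed.

Create HintDb rat.
#[export] Hint Resolve is_rat_IZR is_rat_plus is_rat_mult is_rat_minus
  is_rat_div is_rat_pow : rat.

Lemma is_rat_uu s : is_rat s -> is_rat (uu s).
Proof. intros; unfold uu; auto with rat. Qed.

Lemma is_rat_vv s : is_rat s -> is_rat (vv s).
Proof. intros; unfold vv; auto with rat. Qed.

Lemma uu_pos s : 0 < s < 1 -> 0 < uu s.
Proof. intros; unfold uu; apply Rdiv_lt_0_compat; nra. Qed.

Lemma vv_pos s : 0 < s -> 0 < vv s.
Proof. intros; unfold vv; apply Rdiv_lt_0_compat; nra. Qed.

Lemma one_plus_uu_sq s : s <> 0 -> 1 + uu s ^ 2 = vv s ^ 2.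
Proof. intros; unfold uu, vv; field; assumption. Qed.

Lemma is_rat_cos_angle_of_gen m : is_rat m -> is_rat (cos (angle_of_gen m)).
Proof. intros; rewrite cos_angle_of_gen; auto with rat. Qed.

Lemma is_rat_sin_angle_of_gen m : is_rat m -> is_rat (sin (angle_of_gen m)).
Proof. intros; rewrite sin_angle_of_gen; auto with rat. Qed.

Lemma is_rat_cot_double x :
  is_rat (cos x) -> is_rat (sin x) -> is_rat (cot (2 * x)).
Proof. intros; rewrite cot_double; auto with rat. Qed.

Lemma rational_edge_facts s :
  is_rat s -> 0 < s < 1 ->
  0 < uu s /\ 0 < vv s /\ is_rat (uu s) /\ is_rat (vv s) /\ 1 + uu s ^ 2 = vv s ^ 2.
Proof.
  intros Hr Hs; split; [|split; [|split; [|split]]].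
  - apply uu_pos, Hs.
  - apply vv_pos; lra.
  - apply is_rat_uu, Hr.
  - apply is_rat_vv, Hr.
  - apply one_plus_uu_sq; lra.
Qed.

Lemma is_rat_common_denominator (l : list R) :
  Forall is_rat l ->
  exists d : nat, (0 < d)%nat /\ Forall (fun r => exists k : Z, INR d * r = IZR k) l.
Proof.
  induction 1 as [|r l [q <-] _ [d [Hd Hl]]].
  - exists 1%nat; split; [lia | constructor].
  - exists (d * Pos.to_nat (Qden q))%nat; split; [lia|]; constructor.
    + exists (Z.of_nat d * Qnum q)%Z.
      unfold Q2R; rewrite mult_INR, mult_IZR, <- INR_IZR_INZ,
        (INR_IZR_INZ (Pos.to_nat _)), Znat.positive_nat_Z.
      field; apply not_0_IZR; lia.
    + eapply Forall_impl; [|exact Hl]; intros a [k Hk].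
      exists (k * Z.of_nat (Pos.to_nat (Qden q)))%Z.
      rewrite mult_IZR, <- Hk, <- INR_IZR_INZ, mult_INR; ring.
Qed.

Lemma positive_rationals_common_denominator (l : list R) :
  Forall (fun r => 0 < r /\ is_rat r) l ->
  exists d : nat, (0 < d)%nat /\
    Forall (fun r => exists n : nat, (0 < n)%nat /\ INR n = INR d * r) l.
Proof.
  intros Hl.
  destruct (is_rat_common_denominator l) as [d [Hd Hk]].
  { eapply Forall_impl; [|exact Hl]; intros r [_ Hr]; exact Hr. }
  exists d; split; [exact Hd|].
  rewrite Forall_forall in Hl, Hk |- *; intros r Hr.
  destruct (Hk r Hr) as [k Hdr]; destruct (Hl r Hr) as [Hpos _].
  assert (Hk0 : (0 < k)%Z).
  { apply lt_IZR; rewrite <- Hdr; apply Rmult_lt_0_compat; [apply lt_0_INR|]; lia || lra. }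
  exists (Z.to_nat k); split; [lia|].
  rewrite Hdr, INR_IZR_INZ, Znat.Z2Nat.id; [reflexivity | lia].
Qed.

Lemma scaled_pythagorean_triple (x y a : nat) u v :
  INR y = INR x * u -> INR a = INR x * v -> 1 + u ^ 2 = v ^ 2 ->
  (x * x + y * y = a * a)%nat.
Proof.
  intros Hy Ha Huv; apply INR_eq.
  rewrite plus_INR, !mult_INR, Hy, Ha.
  transitivity (INR x ^ 2 * (1 + u ^ 2)); [ring|].
  rewrite Huv; ring.
Qed.

Lemma perfect_box_of_rational_box u1 u2 u3 u4 v1 v2 v3 v4 :
  Forall (fun r => 0 < r /\ is_rat r) (u1 :: u2 :: u3 :: u4 :: v1 :: v2 :: v3 :: v4 :: nil) ->
  1 + u1 ^ 2 = v1 ^ 2 -> 1 + u2 ^ 2 = v2 ^ 2 ->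
  1 + u3 ^ 2 = v3 ^ 2 -> 1 + u4 ^ 2 = v4 ^ 2 ->
  2 * u1 ^ 2 + 2 * u2 ^ 2 = u3 ^ 2 + u4 ^ 2 ->
  exists x y z c1 c2 a b d1 d2 : nat,
    (0 < x)%nat /\ (0 < y)%nat /\ (0 < z)%nat /\ (0 < c1)%nat /\ (0 < c2)%nat /\
    (0 < a)%nat /\ (0 < b)%nat /\ (0 < d1)%nat /\ (0 < d2)%nat /\
    INR y = INR x * u1 /\ INR z = INR x * u2 /\
    INR c1 = INR x * u3 /\ INR c2 = INR x * u4 /\
    INR a = INR x * v1 /\ INR b = INR x * v2 /\
    INR d1 = INR x * v3 /\ INR d2 = INR x * v4 /\
    (x * x + y * y = a * a)%nat /\ (x * x + z * z = b * b)%nat /\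
    (x * x + c1 * c1 = d1 * d1)%nat /\ (x * x + c2 * c2 = d2 * d2)%nat /\
    (2 * (y * y) + 2 * (z * z) = c1 * c1 + c2 * c2)%nat.
Proof.
  intros Hl H1 H2 H3 H4 Hsum.
  destruct (positive_rationals_common_denominator _ Hl) as [x [Hx Hn]].
  repeat rewrite Forall_cons_iff in Hn.
  destruct Hn as [[y [Hy Ey]] [[z [Hz Ez]] [[c1 [Hc1 Ec1]] [[c2 [Hc2 Ec2]]
    [[a [Ha Ea]] [[b [Hb Eb]] [[d1 [Hd1 Ed1]] [[d2 [Hd2 Ed2]] _]]]]]]]].
  exists x, y, z, c1, c2, a, b, d1, d2.
  do 17 (split; [assumption|]).
  split; [apply (scaled_pythagorean_triple _ _ _ u1 v1); assumption|].
  split; [apply (scaled_pythagorean_triple _ _ _ u2 v2); assumption|].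
  split; [apply (scaled_pythagorean_triple _ _ _ u3 v3); assumption|].
  split; [apply (scaled_pythagorean_triple _ _ _ u4 v4); assumption|].
  apply INR_eq; rewrite !plus_INR, !mult_INR, Ey, Ez, Ec1, Ec2.
  transitivity (INR x ^ 2 * (2 * u1 ^ 2 + 2 * u2 ^ 2)); [simpl; ring|].
  rewrite Hsum; ring.
Qed.

Lemma uu_sq_quotients p q s :
  p <> 0 -> q <> 0 -> s <> 0 -> p ^ 2 + q ^ 2 = 2 ->
  uu (q / s) ^ 2 + uu (s / p) ^ 2
  = 2 * uu s ^ 2 + s ^ 2 * (1 - (p * q) ^ 2) / (2 * (p * q) ^ 2).
Proof.
  intros Hp Hq Hs Hpq.
  apply Rminus_diag_uniq.
  transitivity ((p ^ 2 + q ^ 2 - 2) * (1 / s ^ 2 + s ^ 2 / (p * q) ^ 2) / 4).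
  - unfold uu; field; auto.
  - rewrite Hpq; field; auto.
Qed.

Section LeaningSystem.

Variables C S u : R.
Hypothesis unit_circle : C * C + S * S = 1.
Hypothesis C_pos : 0 < C.
Hypothesis S_pos : 0 < S.

Lemma leaning_system_iff s2 s3 s4 :
  s2 <> 0 -> s3 <> 0 -> s4 <> 0 ->
  (s2 * s3 = C - S /\ s2 * s3 = s3 * s4 * (C + S) /\ s2 * (C + S) = 2 * u * (C - S) + s4) <->
  (s2 = 2 * u * ((C * C - S * S) / (2 * S * C)) /\ s3 = (C - S) / s2 /\ s4 = s2 / (C + S)).
Proof.
  intros n2 n3 n4.
  assert (Hsq : (C + S) * (C + S) = 1 + 2 * S * C) by nra.
  split.
  - intros [h1 [h2 h3]].
    assert (h4 : s2 = s4 * (C + S)).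
    { apply (Rmult_eq_reg_l s3); [nra | assumption]. }
    split; [|split]; [| rewrite <- h1; field; assumption | rewrite h4; field; lra].
    assert (Hlin : s2 * (1 + 2 * S * C) = 2 * u * (C - S) * (C + S) + s2).
    { rewrite <- Hsq; replace s4 with (s2 / (C + S)) in h3 by (rewrite h4; field; lra).
      replace (s2 * ((C + S) * (C + S))) with (s2 * (C + S) * (C + S)) by ring.
      rewrite h3; field; lra. }
    apply (Rmult_eq_reg_r (2 * S * C)); [field_simplify; nra | nra].
  - intros [h1 [h2 h3]]; split; [|split].
    + rewrite h2; field; assumption.
    + rewrite h2, h3; field; split; lra.
    + rewrite h3.
      replace (s2 * (C + S)) with (s2 * ((C + S) * (C + S)) / (C + S)) by (field; lra).
      rewrite Hsq, h1; field; repeat split; lra.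
Qed.

Lemma leaning_sum_of_squares s2 :
  s2 = 2 * u * ((C * C - S * S) / (2 * S * C)) -> s2 <> 0 -> C - S <> 0 ->
  2 * u ^ 2 + 2 * uu s2 ^ 2 = uu ((C - S) / s2) ^ 2 + uu (s2 / (C + S)) ^ 2.
Proof.
  intros Hs2 n2 nCS.
  rewrite uu_sq_quotients by (lra || nra).
  replace ((C + S) * (C - S)) with (C * C - S * S) by ring.
  replace (1 - (C * C - S * S) ^ 2) with (4 * (S * C) ^ 2)
    by (rewrite <- (pow1 2), <- unit_circle; ring).
  assert (Hd : C * C - S * S <> 0) by (intro E; rewrite E in Hs2; apply n2; rewrite Hs2; field; lra).
  rewrite Hs2; field; repeat split; lra.
Qed.

End LeaningSystem.

Theorem theorem1 (s1 m : R) :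
  is_rat s1 -> 0 < s1 < 1 ->
  is_rat m -> 0 < m < sqrt 2 - 1 ->
  let al := angle_of_gen m in
  let u1 := uu s1 in
  (* (a) *)
  (forall s2 s3 s4 : R, s2 <> 0 -> s3 <> 0 -> s4 <> 0 ->
     let Q := s3 * s4 in
     (s2 * s3 = omega_m al /\ s2 * s3 = Q * omega_p al /\
      s2 * omega_p al = 2 * u1 * omega_m al + s4)
     <->
     (s2 = 2 * u1 * cot (2 * al) /\ s3 = omega_m al / s2 /\ s4 = s2 / omega_p al))
  /\
  (* (b) *)
  (let s2 := 2 * u1 * cot (2 * al) in
   let s3 := omega_m al / s2 in
   let s4 := s2 / omega_p al in
   0 < s2 < 1 -> 0 < s3 < 1 -> 0 < s4 < 1 ->
   (forall s, In s (s1 :: s2 :: s3 :: s4 :: nil) ->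
      0 < uu s /\ 0 < vv s /\ is_rat (uu s) /\ is_rat (vv s) /\
      1 + uu s ^ 2 = vv s ^ 2) /\
   2 * uu s1 ^ 2 + 2 * uu s2 ^ 2 = uu s3 ^ 2 + uu s4 ^ 2 /\
   (* a perfect leaning box obtained by scaling with a common denominator x *)
   exists x y z c1 c2 a b d1 d2 : nat,
     (0 < x)%nat /\ (0 < y)%nat /\ (0 < z)%nat /\ (0 < c1)%nat /\ (0 < c2)%nat /\
     (0 < a)%nat /\ (0 < b)%nat /\ (0 < d1)%nat /\ (0 < d2)%nat /\
     INR y = INR x * uu s1 /\ INR z = INR x * uu s2 /\
     INR c1 = INR x * uu s3 /\ INR c2 = INR x * uu s4 /\
     INR a = INR x * vv s1 /\ INR b = INR x * vv s2 /\
     INR d1 = INR x * vv s3 /\ INR d2 = INR x * vv s4 /\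
     (x * x + y * y = a * a)%nat /\ (x * x + z * z = b * b)%nat /\
     (x * x + c1 * c1 = d1 * d1)%nat /\ (x * x + c2 * c2 = d2 * d2)%nat /\
     (2 * (y * y) + 2 * (z * z) = c1 * c1 + c2 * c2)%nat).
Proof.
  intros Hr1 H1 Hrm Hm al u1.
  assert (Hm1 : 0 < m < 1).
  { assert (Hsqrt2 := sqrt_sqrt 2 ltac:(lra)).
    assert (Hsqrt2_pos := sqrt_lt_R0 2 ltac:(lra)).
    nra. }
  destruct (cos_sin_angle_of_gen_pos m Hm1) as [HC HS].
  assert (unit_circle : cos al * cos al + sin al * sin al = 1)
    by (generalize (sin2_cos2 al); unfold Rsqr; lra).
  split.
  - intros s2 s3 s4 n2 n3 n4 Q; unfold Q, omega_m, omega_p; rewrite cot_double.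
    apply (leaning_system_iff _ _ _ unit_circle HC HS); assumption.
  - intros s2 s3 s4 h2 h3 h4.
    assert (HrC := is_rat_cos_angle_of_gen m Hrm).
    assert (HrS := is_rat_sin_angle_of_gen m Hrm).
    assert (Hr2 : is_rat s2) by (unfold s2, u1; auto using is_rat_uu, is_rat_cot_double with rat).
    assert (Hr3 : is_rat s3) by (unfold s3, omega_m; auto with rat).
    assert (Hr4 : is_rat s4) by (unfold s4, omega_p; auto with rat).
    assert (Hedges : forall s, In s (s1 :: s2 :: s3 :: s4 :: nil) ->
      0 < uu s /\ 0 < vv s /\ is_rat (uu s) /\ is_rat (vv s) /\ 1 + uu s ^ 2 = vv s ^ 2)
      by (intros s [<-|[<-|[<-|[<-|[]]]]]; apply rational_edge_facts; assumption).
    assert (Hsum : 2 * uu s1 ^ 2 + 2 * uu s2 ^ 2 = uu s3 ^ 2 + uu s4 ^ 2).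
    { assert (HCS : cos al - sin al <> 0)
        by (intro E; unfold s3, omega_m in h3; rewrite E in h3; unfold Rdiv in h3; lra).
      unfold s3, s4, omega_m, omega_p.
      apply (leaning_sum_of_squares _ _ _ unit_circle HC HS); [| lra | exact HCS].
      unfold s2; rewrite cot_double; reflexivity. }
    split; [exact Hedges|]; split; [exact Hsum|].
    apply perfect_box_of_rational_box; try (apply Hedges; simpl; tauto); try exact Hsum.
    repeat constructor; apply Hedges; simpl; tauto.
Qed.
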